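(* Let $A\cong \mathbb{Z}_2^r\times N$, where $r\ge 0$ is an integer and $N$ is a non-cyclic abelian group of odd order, let $n=|A|$, and let $m$ be the number of elements of $A$ of order at most $2$. Let $\Gamma=\Gamma(A,S)$ be a Cayley graph on $A$ (for some inverse-closed $S\subseteq A\setminus\{0\}$) such that $\mathrm{Aut}(\Gamma)=A\rtimes\langle i\rangle$. If $\chi(\Gamma)<\frac{n}{m+2\log(2n)}$, then $\chi_D(\Gamma)\le\chi(\Gamma)+1$.
   Context: The Cayley graph $\Gamma(A,S)$ has vertex set $A$, with $x,y$ adjacent iff $y-x\in S$. $i:A\to A$ is $i(x)=-x$, and $A\rtimes\langle i\rangle$ denotes the group of permutations of $A$ generated by the translations $x\mapsto x+g$ ($g\in A$) and $i$. $\chi$ is the chromatic number; the distinguishing chromatic number $\chi_D(G)$ is the least $r$ such that $V(G)$ can be partitioned into independent sets $V_1,\dots,V_r$ such that for every non-identity automorphism $\pi$ of $G$ there is some $j$ with $\pi(V_j)\ne V_j$. $\log$ denotes $\log_2$. *)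

From mathcomp Require Import all_boot all_fingroup all_solvable.
From Stdlib Require Import Reals.
Set Implicit Arguments. Unset Strict Implicit. Unset Printing Implicit Defensive.

Local Open Scope group_scope.

Section CayleyDefs.
Variable A : finGroupType.

(* Cayley graph Gamma(A,S): x ~ y iff y - x \in S, written multiplicatively. *)
Definition cay_adj (S : {set A}) (x y : A) : bool := (y * x^-1) \in S.

Definition connection_set (S : {set A}) : Prop :=
  (1 \notin S) /\ (forall s, s \in S -> s^-1 \in S).

Definition is_cay_aut (S : {set A}) (p : {perm A}) : bool :=
  [forall x, forall y, cay_adj S (p x) (p y) == cay_adj S x y].

Definition cay_aut_set (S : {set A}) : {set {perm A}} := [set p | is_cay_aut S p].

Definition transl (g : A) : {perm A} := perm (mulgI g).
Definition invperm : {perm A} := perm (@invg_inj A).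

(* A |x <i> as a permutation group of A: generated by translations and i. *)
Definition hol_group : {set {perm A}} :=
  << [set transl g | g in [set: A]] :|: [set invperm] >>.

Definition proper_col (S : {set A}) k (f : A -> 'I_k) : Prop :=
  forall x y, cay_adj S x y -> f x != f y.

Definition colorable (S : {set A}) (k : nat) : Prop :=
  exists f : A -> 'I_k, proper_col S f.

Definition is_chromatic_number (S : {set A}) (k : nat) : Prop :=
  colorable S k /\ (forall k', colorable S k' -> k <= k').

Definition col_class k (f : A -> 'I_k) (j : 'I_k) : {set A} := [set x | f x == j].

Definition dist_colorable (S : {set A}) (k : nat) : Prop :=
  exists f : A -> 'I_k, proper_col S f /\
    forall p : {perm A}, is_cay_aut S p -> p != 1 ->
      exists j : 'I_k, p @: col_class f j != col_class f j.

Definition is_dist_chromatic_number (S : {set A}) (k : nat) : Prop :=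
  dist_colorable S k /\ (forall k', dist_colorable S k' -> k <= k').

End CayleyDefs.

Definition log2 (x : R) : R := (ln x / ln 2)%R.

Definition chi_bound (chi n m : nat) : Prop :=
  (INR chi < INR n / (INR m + 2 * log2 (2 * INR n)))%R.

From Stdlib Require Import Reals Lra Lia.
From mathcomp Require Import all_boot all_fingroup all_solvable zify.
Set Implicit Arguments. Unset Strict Implicit. Unset Printing Implicit Defensive.

(* Take a largest colour class V of an optimal proper colouring, so that
   |V| >= n/chi > m + 2 log(2n).  The automorphisms are the translations and
   the reflections x |-> c - x, at most 2n of them, and a non-identity one fixes
   at most m points.  Such a permutation has at most (|V| + m)/2 cycles inside V,
   hence leaves at most 2^((|V| + m)/2) < 2^|V| / (2n) subsets of V invariant.
   So some X ⊆ V is moved by every non-identity automorphism, and giving X a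
   new colour yields a distinguishing proper colouring with chi + 1 colours. *)

Section Log2Bound.
Local Open Scope R_scope.

Lemma INR_expn (m n : nat) : INR (m ^ n)%N = INR m ^ n.
Proof. by elim: n => [|n IHn] //; rewrite expnS mulnE mult_INR IHn. Qed.

Lemma log2_lt_pow2 (x a b : nat) : (0 < x)%N ->
  INR a + 2 * log2 (INR x) < INR b -> (a < b)%N /\ (x ^ 2 < 2 ^ (b - a))%N.
Proof.
move=> /ltP x_gt0 lt_ab; rewrite /log2 in lt_ab.
have ln2_gt0 : 0 < ln 2 by rewrite -ln_1; apply: ln_increasing; lra.
have x_ge1 : 1 <= INR x by apply: (le_INR 1).
have lnx_ge0 : 0 <= ln (INR x).
  have [->|x_gt1] : INR x = 1 \/ 1 < INR x by lra.
    by rewrite ln_1; lra.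
  by rewrite -ln_1; apply/Rlt_le/ln_increasing; lra.
have lt_ab_N : (a < b)%coq_nat.
  apply: INR_lt; suff : 0 <= ln (INR x) / ln 2 by lra.
  by apply: Rmult_le_pos => //; apply/Rlt_le/Rinv_0_lt_compat.
split; first exact/ltP.
have lt_ln : 2 * ln (INR x) < INR (b - a) * ln 2.
  rewrite minus_INR; last lia.
  have -> : 2 * ln (INR x) = (2 * (ln (INR x) / ln 2)) * ln 2 by field; lra.
  by apply: Rmult_lt_compat_r; lra.
apply/ltP/INR_lt; rewrite !INR_expn.
apply: ln_lt_inv; try (apply: pow_lt; rewrite /=; lra).
have two : INR 2 = 2 by rewrite /=; lra.
rewrite two !ln_pow ?two; lra.
Qed.

Lemma chi_bound_log2 (chi n m v : nat) : (0 < chi)%N -> (0 < n)%N ->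
  (n <= chi * v)%N -> chi_bound chi n m ->
  INR m + 2 * log2 (INR (2 * n)) < INR v.
Proof.
move=> /ltP chi_gt0 /ltP n_gt0 /leP le_n; rewrite /chi_bound /log2 mult_INR.
have chiR : 0 < INR chi by apply: lt_0_INR.
have nR : 1 <= INR n by apply: (le_INR 1).
have le_nR : INR n <= INR chi * INR v by rewrite -mult_INR; apply: le_INR.
have ln2_gt0 : 0 < ln 2 by rewrite -ln_1; apply: ln_increasing; lra.
have log_gt0 : 0 < ln (INR 2 * INR n) / ln 2.
  by apply: Rdiv_lt_0_compat => //; rewrite -ln_1; apply: ln_increasing; rewrite /=; lra.
set D := INR m + 2 * (ln (INR 2 * INR n) / ln 2) => lt_chi.
have D_gt0 : 0 < D by rewrite /D; have := pos_INR m; lra.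
have : INR chi * D < INR n.
  by rewrite -[X in _ < X](_ : INR n / D * D = INR n); [apply: Rmult_lt_compat_r | field; lra].
nra.
Qed.

End Log2Bound.

Section InvariantSubsets.
Variable T : finType.

Lemma trivIset_porbits (s : {perm T}) : trivIset (porbits s).
Proof.
apply/trivIsetP => _ _ /imsetP [x _ ->] /imsetP [y _ ->] neq_xy.
apply/pred0P => z /=; apply: contraNF neq_xy.
by rewrite -!eq_porbit_mem => /andP [/eqP <- /eqP <-].
Qed.

Lemma porbit_sub (s : {perm T}) (X : {set T}) x :
  s @: X \subset X -> x \in X -> porbit s x \subset X.
Proof.
move=> sX xX; apply/subsetP => _ /porbitP [i ->].
elim: i => [|i IHi]; first by rewrite expg0 perm1.
by rewrite expgSr permM (subsetP sX) ?imset_f.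
Qed.

Variables (p : {perm T}) (V : {set T}).

Definition invariant_subsets := [set X in powerset V | p @: X == X].
Definition fixed_points_in := [set x in V | p x == x].
Definition porbits_in := [set porbit p x | x in [set x | porbit p x \subset V]].

Lemma porbits_inS : porbits_in \subset porbits p.
Proof. by apply: imsetS; apply/subsetP. Qed.

Lemma cover_porbits_in : cover porbits_in \subset V.
Proof.
apply/subsetP => y /bigcupP [O /imsetP [x]].
by rewrite inE => /subsetP xV ->; apply: xV.
Qed.

Lemma card_invariant_subsets : #|invariant_subsets| <= 2 ^ #|porbits_in|.
Proof.
pose cycles (X : {set T}) := [set O in porbits_in | O \subset X].
have coverE X : X \in invariant_subsets -> cover (cycles X) = X.
  rewrite !inE => /andP [XV /eqP pX]; apply/setP => x; apply/bigcupP/idP.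
    by case=> O; rewrite inE => /andP [_ /subsetP]; apply.
  have sX y : y \in X -> porbit p y \subset X by apply: porbit_sub; rewrite pX.
  move=> xX; exists (porbit p x); last exact: porbit_id.
  by rewrite !inE sX // andbT imset_f // inE (subset_trans (sX _ xX)).
rewrite -card_powerset -(card_in_imset (f := cycles)); last first.
  by move=> X Y /coverE eX /coverE eY eXY; rewrite -eX -eY eXY.
apply/subset_leq_card/subsetP => _ /imsetP [X _ ->].
by rewrite powersetE; apply/subsetP => O; rewrite inE => /andP [].
Qed.

Lemma card_singleton_porbits_in :
  #|[set O in porbits_in | #|O| == 1]| <= #|fixed_points_in|.
Proof.
apply: leq_trans (leq_imset_card (porbit p) _); apply/subset_leq_card/subsetP => O.
rewrite !inE => /andP [/imsetP [x]]; rewrite inE => /subsetP xV -> /cards1P [y Oy].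
have px : p x = x.
  by have := mem_porbit p 1 x; have := porbit_id p x; rewrite expg1 Oy !inE => /eqP -> /eqP.
by apply/imsetP; exists x; rewrite // inE xV ?porbit_id // px eqxx.
Qed.

Lemma double_card_porbits_in :
  (#|porbits_in|).*2 <= #|V| + #|fixed_points_in|.
Proof.
have coverE : #|cover porbits_in| = \sum_(O in porbits_in) #|O|.
  by rewrite (eqP (trivIsetS porbits_inS (trivIset_porbits p))).
apply: leq_trans (leq_add (subset_leq_card cover_porbits_in) card_singleton_porbits_in).
rewrite coverE -[#|[set _ in _ | _]|]sum1_card.
under [X in _ + X]eq_bigl => O do rewrite inE.
rewrite big_mkcondr -big_split -muln2 -sum_nat_const /=.
apply: leq_sum => _ /imsetP [x _ ->].
by have := card_porbit_neq0 p x; case: #|porbit p x| => [|[|k]].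
Qed.

Lemma card_invariant_subsets_sqr :
  #|invariant_subsets| ^ 2 <= 2 ^ (#|V| + #|fixed_points_in|).
Proof.
apply: leq_trans (_ : (2 ^ #|porbits_in|) ^ 2 <= _).
  by rewrite leq_sqr card_invariant_subsets.
by rewrite -expnM leq_exp2l // muln2 double_card_porbits_in.
Qed.

End InvariantSubsets.

Lemma transl1 (A : finGroupType) : transl (1 : A) = 1%g.
Proof. by apply/permP => x; rewrite permE perm1 mul1g. Qed.

Section AffinePerms.
Variable A : finGroupType.
Hypothesis mulgC : forall x y : A, commute x y.
Local Open Scope group_scope.

Lemma reflection_inj (c : A) : injective (fun x => c * x^-1).
Proof. by move=> x y /mulgI /invg_inj. Qed.

Definition reflection (c : A) : {perm A} := perm (@reflection_inj c).

Definition affine_perms : {set {perm A}} :=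
  [set transl g | g : A] :|: [set reflection c | c : A].

Lemma affine_perms_group : group_set affine_perms.
Proof.
apply/group_setP; split; first by rewrite -transl1 inE imset_f.
move=> p q; rewrite !inE => /orP [] /imsetP [a _ ->] /orP [] /imsetP [b _ ->].
- apply/orP; left; apply/imsetP; exists (b * a) => //.
  by apply/permP => x; rewrite permM !permE mulgA.
- apply/orP; right; apply/imsetP; exists (b * a^-1) => //.
  by apply/permP => x; rewrite permM !permE invMg -mulgA (mulgC a^-1).
- apply/orP; right; apply/imsetP; exists (b * a) => //.
  by apply/permP => x; rewrite permM !permE mulgA.
- apply/orP; left; apply/imsetP; exists (b * a^-1) => //.
  by apply/permP => x; rewrite permM !permE invMg invgK -!mulgA (mulgC x).
Qed.

Canonical affine_perms_groupType := Group affine_perms_group.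

Lemma hol_group_sub_affine : hol_group A \subset affine_perms.
Proof.
rewrite -[affine_perms]/(gval affine_perms_groupType) gen_subG.
apply/subsetP => p; rewrite !inE => /orP [/imsetP [g _ ->] | /eqP ->].
  by rewrite imset_f.
apply/orP; right; apply/imsetP; exists 1 => //.
by apply/permP => x; rewrite !permE mul1g.
Qed.

Lemma card_affine_perms : #|affine_perms| <= (#|A|).*2.
Proof.
apply: leq_trans (leq_card_setU _ _).1 _.
by rewrite -addnn leq_add // (leq_trans (leq_imset_card _ _)) // cardsT.
Qed.

Lemma card_fixed_affine (p : {perm A}) (V : {set A}) :
  p \in affine_perms -> p != 1 ->
  #|fixed_points_in p V| <= #|[set x : A | x ^+ 2 == 1]|.
Proof.
rewrite inE => /orP [] /imsetP [c _ ->] p_neq1.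
  suff -> : fixed_points_in (transl c) V = set0 by rewrite cards0.
  apply/setP => x; rewrite !inE permE; apply: contraNF p_neq1 => /andP [_ /eqP cx].
  have -> : c = 1 by apply: (mulIg x); rewrite mul1g.
  by rewrite transl1.
(* The fixed points of x |-> c x^-1 are the square roots of c, and x |-> x x0^-1
   maps them injectively to involutions. *)
set F := fixed_points_in _ V.
have [-> | [x0 Fx0]] := set_0Vmem F; first by rewrite cards0.
have sqrF x : x \in F -> c = x ^+ 2.
  by rewrite !inE permE => /andP [_ /eqP cx]; rewrite expgS expg1 -{1}cx mulgKV.
rewrite -(card_in_imset (f := fun x => x * x0^-1)); last by move=> x y _ _ /mulIg.
apply/subset_leq_card/subsetP => _ /imsetP [x Fx ->].
by rewrite inE expgMn ?expgVn -?sqrF ?mulgV.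
Qed.

End AffinePerms.

Lemma leq_card_bigcup (I T : finType) (P : {pred I}) (F : I -> {set T}) :
  #|\bigcup_(i in P) F i| <= \sum_(i in P) #|F i|.
Proof.
apply: (big_ind2 (fun (X : {set T}) k => #|X| <= k)); first by rewrite cards0.
  move=> X1 k1 X2 k2 le1 le2.
  by apply: leq_trans (leq_add le1 le2); apply: (leq_card_setU X1 X2).1.
by [].
Qed.

Lemma exists_subset_not_invariant (T : finType) (P : {set {perm T}}) (V : {set T}) :
  \sum_(p in P) #|invariant_subsets p V| < 2 ^ #|V| ->
  exists2 X : {set T}, X \subset V & forall p, p \in P -> p @: X != X.
Proof.
move=> small.
have [X] : exists2 X, X \in powerset V & X \notin \bigcup_(p in P) invariant_subsets p V.
  apply/subsetPn; apply: contraTN small => /subset_leq_card.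
  by rewrite card_powerset -leqNgt => le; apply: leq_trans le (leq_card_bigcup _ _).
rewrite powersetE => XV notinv; exists X => // p Pp.
by apply: contraNN notinv => pX; apply/bigcupP; exists p; rewrite // inE powersetE XV.
Qed.

Lemma sum_lt_of_mul_lt (I : finType) (P : {pred I}) (a : I -> nat) b c :
  0 < c -> #|P| < b -> (forall i, i \in P -> a i * b < c) ->
  \sum_(i in P) a i < c.
Proof.
move=> c_gt0 Pb lt_ab; rewrite -(ltn_pmul2r (leq_ltn_trans (leq0n _) Pb)) big_distrl /=.
apply: (@leq_ltn_trans (\sum_(i in P) c)); first by apply: leq_sum => i /lt_ab /ltnW.
by rewrite sum_nat_const mulnC ltn_pmul2l.
Qed.

Lemma mul_lt_pow2 a b v m : m <= v ->
  a ^ 2 <= 2 ^ (v + m) -> b ^ 2 < 2 ^ (v - m) -> a * b < 2 ^ v.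
Proof.
move=> mv le_a lt_b; rewrite -(ltn_exp2r _ _ (isT : 0 < 2)) expnMn -expnM.
rewrite (_ : v * 2 = (v + m) + (v - m)) ?expnD; last lia.
apply: leq_ltn_trans (leq_mul le_a (leqnn _)) _.
by rewrite -expnD ltn_pmul2l ?expn_gt0.
Qed.

Section Recolouring.
Variables (A : finGroupType) (S : {set A}) (k : nat) (f : A -> 'I_k).

Lemma exists_large_col_class : 0 < k -> exists j, #|A| <= k * #|col_class f j|.
Proof.
move=> k_gt0; pose j := [arg max_(i > Ordinal k_gt0) #|col_class f i|].
exists j; have sumE : #|A| = \sum_(i < k) #|col_class f i|.
  rewrite -sum1_card (partition_big f predT) //=; apply: eq_bigr => i _.
  by rewrite -sum1_card; apply: eq_bigl => x; rewrite inE.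
rewrite sumE /j; case: arg_maxnP => // i _ max_i.
apply: (@leq_trans (\sum_(i0 < k) #|col_class f i|)).
  by apply: leq_sum => i0 _; apply: max_i.
by rewrite sum_nat_const card_ord.
Qed.

Definition add_color (X : {set A}) (x : A) : 'I_k.+1 :=
  if x \in X then ord_max else widen_ord (leqnSn k) (f x).

Lemma widen_ord_neq_max (i : 'I_k) : widen_ord (leqnSn k) i != ord_max.
Proof. by rewrite -val_eqE /= neq_ltn ltn_ord. Qed.

Lemma col_class_add_color_max (X : {set A}) : col_class (add_color X) ord_max = X.
Proof.
apply/setP => x; rewrite inE /add_color.
by case: ifP => _; rewrite ?eqxx // (negbTE (widen_ord_neq_max _)).
Qed.

Lemma proper_col_add_color (X : {set A}) j :
  proper_col S f -> X \subset col_class f j -> proper_col S (add_color X).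
Proof.
move=> f_proper /subsetP Xj x y xy; rewrite /add_color.
have colX z : z \in X -> f z = j by move=> /Xj; rewrite inE => /eqP.
case: ifP => xX; case: ifP => yX.
- by have := f_proper x y xy; rewrite (colX x xX) (colX y yX) eqxx.
- by rewrite eq_sym widen_ord_neq_max.
- by rewrite widen_ord_neq_max.
- by apply: contra (f_proper x y xy) => /eqP /(congr1 val) /= fxy; apply/eqP/val_inj.
Qed.

Lemma dist_colorable_add_color (X : {set A}) j :
  proper_col S f -> X \subset col_class f j ->
  (forall p, is_cay_aut S p -> p != 1%g -> p @: X != X) ->
  dist_colorable S k.+1.
Proof.
move=> f_proper Xj moved; exists (add_color X); split.
  exact: proper_col_add_color Xj.
by move=> p autp p1; exists ord_max; rewrite col_class_add_color_max moved.
Qed.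

End Recolouring.

Theorem mainTheorem8 (A : finGroupType) (E N : {group A}) (S : {set A})
    (chi chiD : nat) :
  abelian [set: A] ->
  (E \x N)%g = [set: A] ->
  (2.-abelem E)%g ->
  odd #|N| ->
  ~~ cyclic N ->
  connection_set S ->
  cay_aut_set S = hol_group A ->
  is_chromatic_number S chi ->
  is_dist_chromatic_number S chiD ->
  chi_bound chi #|A| #|[set x : A | (x ^+ 2 == 1)%g]| ->
  chiD <= chi.+1.
Proof.
move=> cAA _ _ _ _ _ autS [[f f_proper] _] [_ chiD_min] bound.
have mulgC (x y : A) : commute x y by apply: (centsP cAA); rewrite inE.
have n_gt0 : 0 < #|A| by apply/card_gt0P; exists 1%g.
have n2_gt0 : 0 < 2 * #|A| by rewrite muln_gt0 n_gt0.
have chi_gt0 : 0 < chi := leq_ltn_trans (leq0n _) (ltn_ord (f 1%g)).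
have [j large] := exists_large_col_class f chi_gt0.
have [mV pow] := log2_lt_pow2 n2_gt0 (chi_bound_log2 chi_gt0 n_gt0 large bound).
set Aut := cay_aut_set S.
have Aut_affine : Aut \subset affine_perms A by rewrite /Aut autS hol_group_sub_affine.
have few_invariant :
    \sum_(p in Aut :\ 1%g) #|invariant_subsets p (col_class f j)| < 2 ^ #|col_class f j|.
  apply: (@sum_lt_of_mul_lt _ _ _ (2 * #|A|)); rewrite ?expn_gt0 //.
    have cardAut : #|Aut| = #|Aut :\ 1%g|.+1 by rewrite (cardsD1 1%g) {1}/Aut autS group1.
    rewrite -cardAut mul2n.
    by apply: leq_trans (subset_leq_card Aut_affine) (card_affine_perms A).
  move=> p; rewrite in_setD1 => /andP [p1 Autp]; apply: mul_lt_pow2 (ltnW mV) _ pow.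
  apply: leq_trans (card_invariant_subsets_sqr p _) _; rewrite leq_exp2l // leq_add2l.
  exact: card_fixed_affine mulgC _ _ (subsetP Aut_affine p Autp) p1.
have [X XV moved] := exists_subset_not_invariant few_invariant.
apply: chiD_min; apply: (dist_colorable_add_color f_proper XV) => p autp p1.
by apply: moved; rewrite in_setD1 p1 inE.
Qed.
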